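(* Let $N\ge1$, $m\ge2$, let $A\in\mathbb{R}^{m\times m}$ be the integrator matrix, $C\in\mathbb{R}^{1\times m}$, $K_5\in\mathbb{R}^{1\times m}$, and $K_6\in\mathbb{R}^{m\times1}$ such that every eigenvalue of $A+K_6C$ has modulus strictly less than $1$. Fix $e_0\in\mathbb{R}^{Nm}$ and set $\omega_d[k]=(I_N\otimes(K_5K_6C(A+K_6C)^k))e_0\in\mathbb{R}^N$. Consider $$\bar Z[k+1]=(I_N-S[k])\bar Z[k]+\omega_d[k],\qquad k=0,1,2,\dots,$$ with $\bar Z[k]=(\bar z_1[k],\dots,\bar z_N[k])^T\in\mathbb{R}^N$ and $S[k]$ defined from the switching graph $\mathcal{G}_{\sigma[k]}$ as in the context. If $\mathcal{G}_{\sigma[k]}$ is uniformly jointly quasi-strongly connected in the discrete-time sense, then for every $\bar Z[0]\in\mathbb{R}^N$ there exists $\bar z^*\in\mathbb{R}$ such that $\lim_{k\to\infty}\bar z_i[k]=\bar z^*$ for all $i=1,\dots,N$.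
   Context: $A$ has ones on the superdiagonal and zeros elsewhere; $\otimes$ is the Kronecker product. Graphs: nodes $v_1,\dots,v_N$; edge $e_{ij}$ from $v_j$ to $v_i$; no self-edges; a finite index set $\mathcal{S}$ of digraphs, graph $\mathcal{G}_q$ having fixed weights $\alpha^{ij}_q>0$ on its edges ($0$ otherwise), $\mathcal{N}_i(q)=\{j:e_{ij}\in\mathcal{G}_q\}$; $\sigma:\{0,1,2,\dots\}\to\mathcal{S}$ arbitrary. $S[k]\in\mathbb{R}^{N\times N}$: with $d_i[k]=\sum_{j\in\mathcal{N}_i(\sigma[k])}\alpha^{ij}_{\sigma[k]}$, the $(i,i)$ entry is $d_i[k]/(1+d_i[k])$ and the $(i,j)$ entry ($i\ne j$) is $-\alpha^{ij}_{\sigma[k]}/(1+d_i[k])$. A digraph is quasi-strongly connected if some node has a directed path to every other node. $\mathcal{G}_{\sigma[k]}$ is uniformly jointly quasi-strongly connected in the discrete-time sense if there is an integer $M>0$ such that for every $k\ge0$ the graph with edge set $\bigcup_{i=k}^{k+M}\mathcal{E}(\mathcal{G}_{\sigma[i]})$ is quasi-strongly connected. *)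

From Stdlib Require Import Reals Lra Lia Arith List Relations.
Open Scope R_scope.

(* Matrices are functions nat -> nat -> R, vectors nat -> R; dimensions
   are passed explicitly; all indices are 0-based. *)

Fixpoint sumR (n : nat) (f : nat -> R) : R :=
  match n with
  | O => 0
  | S n' => sumR n' f + f n'
  end.

Definition matmul (n : nat) (A B : nat -> nat -> R) : nat -> nat -> R :=
  fun i j => sumR n (fun l => A i l * B l j).

Definition idmat : nat -> nat -> R :=
  fun i j => if Nat.eqb i j then 1 else 0.

Fixpoint matpow (m : nat) (M : nat -> nat -> R) (k : nat) : nat -> nat -> R :=
  match k with
  | O => idmat
  | S k' => matmul m (matpow m M k') M
  end.

Definition mulmv (n : nat) (A : nat -> nat -> R) (v : nat -> R) : nat -> R :=
  fun i => sumR n (fun j => A i j * v j).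

Definition kron (p q : nat) (A B : nat -> nat -> R) : nat -> nat -> R :=
  fun i j => A (i / p)%nat (j / q)%nat * B (i mod p)%nat (j mod q)%nat.

Definition integrator : nat -> nat -> R :=
  fun i j => if Nat.eqb j (S i) then 1 else 0.

(* (a + i b) is a (complex) eigenvalue of the real m x m matrix M:
   there is a nonzero complex vector x + i y with M (x + i y) = (a + i b)(x + i y) *)
Definition is_complex_eigenvalue (m : nat) (M : nat -> nat -> R) (a b : R) : Prop :=
  exists x y : nat -> R,
    (exists j, (j < m)%nat /\ (x j <> 0 \/ y j <> 0)) /\
    (forall i, (i < m)%nat ->
       mulmv m M x i = a * x i - b * y i /\
       mulmv m M y i = b * x i + a * y i).

Definition schur_stable (m : nat) (M : nat -> nat -> R) : Prop :=
  forall a b, is_complex_eigenvalue m M a b -> a * a + b * b < 1.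

(* Switching graphs: graph G_q has weight alpha q i j on edge e_ij (from v_j
   to v_i); alpha q i j > 0 iff the edge is present, 0 otherwise. *)

Definition deg (N : nat) {Q : Type} (alpha : Q -> nat -> nat -> R)
  (sigma : nat -> Q) (k i : nat) : R :=
  sumR N (fun j => alpha (sigma k) i j).

Definition Smat (N : nat) {Q : Type} (alpha : Q -> nat -> nat -> R)
  (sigma : nat -> Q) (k : nat) : nat -> nat -> R :=
  fun i j =>
    if Nat.eqb i j then deg N alpha sigma k i / (1 + deg N alpha sigma k i)
    else - alpha (sigma k) i j / (1 + deg N alpha sigma k i).

Definition quasi_strongly_connected (N : nat) (E : nat -> nat -> Prop) : Prop :=
  exists r, (r < N)%nat /\
    forall v, (v < N)%nat ->
      clos_refl_trans nat (fun a b => (a < N)%nat /\ (b < N)%nat /\ E a b) r v.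

(* union graph of G_sigma[t], t = k..k+M: edge j -> i iff e_ij in some G_sigma[t] *)
Definition union_edges {Q : Type} (alpha : Q -> nat -> nat -> R)
  (sigma : nat -> Q) (k M : nat) : nat -> nat -> Prop :=
  fun j i => exists t, (k <= t <= k + M)%nat /\ alpha (sigma t) i j > 0.

Definition UJQSC (N : nat) {Q : Type} (alpha : Q -> nat -> nat -> R)
  (sigma : nat -> Q) : Prop :=
  exists M : nat, (M > 0)%nat /\
    forall k, quasi_strongly_connected N (union_edges alpha sigma k M).

From Stdlib Require Import Reals Lra Lia List Relations Classical ClassicalEpsilon.
Open Scope R_scope.

(* Over
      the complex numbers, Cayley-Hamilton shows that k |-> (M^k)_ab is
      annihilated by prod_z (S - z), S the shift and z ranging over the
      eigenvalues; removing the roots one at a time, each of modulus < 1,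
      shows the sequence is absolutely summable.
   2. Perturbed consensus (section PerturbedConsensus).  For row stochastic
      P[k] whose diagonal and edge entries are at least delta > 0, with
      uniformly jointly quasi-strongly connected graphs and a summable
      perturbation, the maximum and minimum of the state converge, and over
      N - 1 windows any two nodes have a common influencer, which contracts
      their gap; hence both envelopes have the same limit.

   Finally, finiteness of the graph family gives the uniform delta for
   I - S[k] (section GraphFamily), and [lemma3] combines the two parts. *)

(* Bounded partial sums; used for nonnegative sequences. *)
Definition summable (g : nat -> R) : Prop := exists B, forall n, sumR n g <= B.

Module StableMatrixPowers.
From HB Require Import structures.
From mathcomp Require Import all_boot all_order all_algebra.
From mathcomp Require Import complex mxpoly closed_field Rstruct lra.
Set Implicit Arguments. Unset Strict Implicit. Unset Printing Implicit Defensive.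
Import Order.TTheory GRing.Theory Num.Theory.
Local Open Scope ring_scope.

Section ShiftRecurrences.
Variable F : rcfType.
Local Notation C := F[i].
Import Normc.

(* [shift_eval n p y k] is (p(S) y)(k), where S is the left shift of the
   sequence y and only the first n coefficients of p are used. *)
Definition shift_eval (n : nat) (p : {poly C}) (y : nat -> C) (k : nat) : C :=
  \sum_(i < n) p`_i * y (k + i)%N.

Lemma shift_eval_mulXsubC n (q : {poly C}) c y k : (size q <= n)%N ->
  shift_eval n.+1 (('X - c%:P) * q) y k =
  shift_eval n q (fun k => y k.+1 - c * y k) k.
Proof.
move=> size_q; rewrite /shift_eval.
have coefXq i : (('X - c%:P) * q)`_i = (if i == 0%N then 0 else q`_i.-1) - c * q`_i.
  by rewrite mulrBl coefB coefXM coefCM.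
under eq_bigr => i _ do rewrite coefXq mulrBl.
rewrite sumrB big_ord_recl big_ord_recr /= mul0r add0r.
rewrite (nth_default 0 size_q) mulr0 mul0r addr0 -sumrB.
apply: eq_bigr => i _; rewrite /bump /= add0n add1n addnS mulrBr.
by congr (_ - _); rewrite mulrCA mulrA.
Qed.

Lemma contracting_sum_bound (a b : nat -> F) (rho B : F) :
  (forall k, 0 <= a k) -> 0 <= rho -> rho < 1 ->
  (forall k, a k.+1 <= rho * a k + b k) ->
  (forall n, \sum_(k < n) b k <= B) ->
  forall n, \sum_(k < n) a k <= (a 0%N + B) / (1 - rho).
Proof.
move=> a_ge0 rho_ge0 rho_lt1 a_rec b_bound n.
rewrite ler_pdivlMr ?subr_gt0 //.
suff: \sum_(k < n) a k <= a 0%N + rho * \sum_(k < n) a k + B by lra.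
case: n => [|n].
  by have := b_bound 0%N; have := a_ge0 0%N; rewrite !big_ord0; lra.
rewrite [X in X <= _]big_ord_recl.
have tail : \sum_(i < n) a (bump 0 i) <= rho * \sum_(i < n) a i + \sum_(i < n) b i.
  by rewrite mulr_sumr -big_split /=; apply: ler_sum => i _; exact: a_rec.
have grow : \sum_(i < n) a i <= \sum_(i < n.+1) a i.
  by rewrite big_ord_recr lerDl.
have := ler_wpM2l rho_ge0 grow; have := b_bound n; lra.
Qed.

Lemma normc_ge0 (z : C) : 0 <= normc z.
Proof. by case: z => a b; rewrite /normc sqrtr_ge0. Qed.

(* A sequence annihilated by prod_(z <- rs) (S - z), all |z| < 1, is
   absolutely summable: peel off one root at a time using the two lemmas
   above. *)
Lemma annihilated_summable (rs : seq C) : (forall z, z \in rs -> normc z < 1) ->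
  forall y : nat -> C,
  (forall k, shift_eval (size rs).+1 (\prod_(z <- rs) ('X - z%:P)) y k = 0) ->
  exists B : F, forall n, \sum_(k < n) normc (y k) <= B.
Proof.
elim: rs => [|l rs IH] small_roots y annihilated.
  exists 0 => n; rewrite big1 // => k _.
  have := annihilated k.
  by rewrite /shift_eval big_ord_recl big_ord0 big_nil addr0 coefC /= mul1r addn0 => ->; exact: normc0.
pose y' k := y k.+1 - l * y k.
have [B sum_y'] : exists B : F, forall n, \sum_(k < n) normc (y' k) <= B.
  apply: IH => [z z_rs|k]; first by apply: small_roots; rewrite inE z_rs orbT.
  rewrite -shift_eval_mulXsubC ?size_prod_XsubC //.
  by have := annihilated k; rewrite big_cons.
have l_small : normc l < 1 by apply: small_roots; rewrite inE eqxx.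
exists ((normc (y 0%N) + B) / (1 - normc l)).
apply: (@contracting_sum_bound (fun k => normc (y k)) (fun k => normc (y' k))) => //.
- by move=> k; exact: normc_ge0.
- exact: normc_ge0.
- move=> k; have -> : y k.+1 = y' k + l * y k by rewrite /y' subrK.
  by apply: le_trans (le_normcD _ _) _; rewrite normcM addrC.
Qed.

End ShiftRecurrences.

Section MatrixPowers.
Variable F : rcfType.
Local Notation C := F[i].
Import Normc.

Lemma char_poly_tr (n : nat) (A : 'M[C]_n) : char_poly A^T = char_poly A.
Proof.
rewrite /char_poly -det_tr; congr (\det _).
by rewrite /char_poly_mx linearB /= tr_scalar_mx map_trmx trmxK.
Qed.

Lemma horner_mx_sum (n : nat) (A : 'M[C]_n.+1) (p : {poly C}) :
  horner_mx A p = \sum_(i < size p) p`_i *: A ^+ i.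
Proof.
rewrite -{1}[p]coefK poly_def linear_sum; apply: eq_bigr => i _.
by rewrite linearZ /= rmorphXn /= horner_mx_X.
Qed.

(* If every eigenvalue of A has modulus < 1, each entry of A^k is absolutely
   summable in k: by Cayley-Hamilton and the factorisation of the
   characteristic polynomial, k |-> A^k a b is annihilated by
   prod_z (S - z) over the eigenvalues z. *)
Lemma mx_pow_summable (n : nat) (A : 'M[C]_n.+1) :
  (forall z (v : 'cV_n.+1), v != 0 -> A *m v = z *: v -> normc z < 1) ->
  forall a b, exists B : F, forall N, \sum_(k < N) normc ((A ^+ k) a b) <= B.
Proof.
move=> stable a b.
have [rs char_rs] := closed_field_poly_normal (char_poly A).
rewrite (monicP (char_poly_monic A)) scale1r in char_rs.
apply: (@annihilated_summable F rs _ (fun k => (A ^+ k) a b)) => [z z_rs|k].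
  have : root (char_poly A^T) z by rewrite char_poly_tr char_rs root_prod_XsubC.
  rewrite -eigenvalue_root_char => /eigenvalueP [v v_eig v_nz].
  apply: (stable z v^T); first by apply: contra v_nz => /eqP v0; rewrite -[v]trmxK v0 trmx0.
  by rewrite -[A]trmxK -trmx_mul v_eig linearZ.
have CH := Cayley_Hamilton A.
rewrite horner_mx_sum char_rs size_prod_XsubC in CH.
have shifted : A ^+ k *m (\sum_(i < (size rs).+1) (\prod_(z <- rs) ('X - z%:P))`_i *: A ^+ i)
   = \sum_(i < (size rs).+1) (\prod_(z <- rs) ('X - z%:P))`_i *: A ^+ (k + i).
  rewrite mulmx_sumr; apply: eq_bigr => i _.
  by rewrite -scalemxAr mulmxE -exprD.
move/matrixP: shifted => /(_ a b).
rewrite CH mulmx0 mxE summxE => vanish.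
rewrite /shift_eval [RHS]vanish; apply: eq_bigr => i _.
by rewrite mxE.
Qed.

End MatrixPowers.

Lemma sumR_big (n : nat) (f : nat -> R) : sumR n f = \sum_(i < n) f i.
Proof.
elim: n => [|n IH] /=; first by rewrite big_ord0.
by rewrite big_ord_recr /= IH.
Qed.

Import Normc.
Local Notation C := R[i].

Lemma normc_real (x : R) : normc (x%:C)%C = Rabs x.
Proof. by rewrite /normc /= expr0n /= addr0 sqrtr_sqr. Qed.

Lemma Re_sum n (f : 'I_n -> C) :
  complex.Re (\sum_(i < n) f i) = \sum_(i < n) complex.Re (f i).
Proof. exact: (raddf_sum (@complex.Re R : Rcomplex R -> R)). Qed.

Lemma Im_sum n (f : 'I_n -> C) :
  complex.Im (\sum_(i < n) f i) = \sum_(i < n) complex.Im (f i).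
Proof. exact: (raddf_sum (@complex.Im R : Rcomplex R -> R)). Qed.

Section RealMatrix.
Variable m : nat.
Variable M : nat -> nat -> R.

Definition mx_of : 'M[R]_m.+1 := \matrix_(i, j) M i j.
Definition cmx_of : 'M[C]_m.+1 := map_mx (real_complex R) mx_of.

Lemma matpow_mx k i j : (i < m.+1)%N -> (j < m.+1)%N ->
  matpow m.+1 M k i j = (mx_of ^+ k) (inord i) (inord j).
Proof.
elim: k i j => [|k IH] i j ltim ltjm /=.
  rewrite expr0 mxE /idmat.
  case: (PeanoNat.Nat.eqb_spec i j) => [->|neq_ij]; first by rewrite eqxx.
  by case: eqP => // /(congr1 val) /=; rewrite !inordK.
rewrite /matmul sumR_big exprSr -mulmxE mxE.
by apply: eq_bigr => l _; rewrite IH // mxE inordK // inord_val.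
Qed.

(* A complex eigenpair of the complexified matrix is an eigenpair in the
   sense of [is_complex_eigenvalue], so Schur stability bounds it. *)
Lemma schur_stable_cmx : schur_stable m.+1 M ->
  forall z (v : 'cV[C]_m.+1), v != 0 -> cmx_of *m v = z *: v -> normc z < 1.
Proof.
move=> stable z v v_nz v_eig.
pose x j := complex.Re (v (inord j) 0).
pose y j := complex.Im (v (inord j) 0).
have eig : is_complex_eigenvalue m.+1 M (complex.Re z) (complex.Im z).
  exists x, y; split.
    apply: NNPP => all0; move/negP: v_nz; apply; apply/eqP/matrixP => i k.
    rewrite (ord1 k) mxE.
    have [xi0 yi0] : x i = 0 /\ y i = 0.
      apply: NNPP => nz; apply: all0; exists i; split; first exact/ssrnat.ltP.
      exact: not_and_or nz.
    by move: xi0 yi0; rewrite /x /y inord_val; case: (v i 0) => ? ? /= -> ->.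
  move=> i /ssrnat.ltP ltim.
  move/matrixP: v_eig => /(_ (inord i) 0); rewrite !mxE => eq_i.
  have := congr1 (@complex.Re R) eq_i; have := congr1 (@complex.Im R) eq_i.
  rewrite Re_sum Im_sum /mulmv !sumR_big => im_i re_i; split.
  - rewrite [RHS](_ : _ = complex.Re (z * v (inord i) 0)); last first.
      by rewrite /x /y; case: (v (inord i) 0) => [c d]; case: (z).
    rewrite -re_i; apply: eq_bigr => j _; rewrite /x !mxE inordK // inord_val.
    by case: (v j 0) => ? ? /=; rewrite mul0r subr0.
  - rewrite [RHS](_ : _ = complex.Im (z * v (inord i) 0)); last first.
      by rewrite /x /y; case: (v (inord i) 0) => [c d]; case: (z) => a b /=; rewrite addrC.
    rewrite -im_i; apply: eq_bigr => j _; rewrite /y !mxE inordK // inord_val.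
    by case: (v j 0) => ? ? /=; rewrite mul0r addr0.
have := stable _ _ eig.
case: z {v_eig eig} => a b /= /RltP lt1.
by rewrite -sqrtr1 ltr_sqrt ?ltr01.
Qed.

End RealMatrix.

Lemma pow_summable (m : nat) (M : nat -> nat -> R) :
  (1 <= m)%coq_nat -> schur_stable m M ->
  forall a b, (a < m)%coq_nat -> (b < m)%coq_nat ->
  summable (fun k => Rabs (matpow m M k a b)).
Proof.
case: m M => [|m] M m_pos; first by move/ssrnat.leP: m_pos.
move=> stable a b /ssrnat.ltP ltam /ssrnat.ltP ltbm.
have [B sumB] := mx_pow_summable (schur_stable_cmx stable) (inord a) (inord b).
exists B => n; apply/RleP; rewrite sumR_big.
apply: le_trans (sumB n); rewrite le_eqVlt; apply/orP; left; apply/eqP.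
apply: eq_bigr => k _.
by rewrite matpow_mx // /cmx_of -rmorphXn mxE normc_real.
Qed.

End StableMatrixPowers.

Lemma sumR_ext n f g : (forall i, (i < n)%nat -> f i = g i) -> sumR n f = sumR n g.
Proof.
  induction n as [|n IH]; intros Hfg; simpl; [reflexivity|].
  rewrite IH by (intros; apply Hfg; lia). rewrite Hfg by lia. reflexivity.
Qed.

Lemma sumR_zero n : sumR n (fun _ => 0) = 0.
Proof. induction n as [|n IH]; simpl; [|rewrite IH]; lra. Qed.

Lemma sumR_plus n f g : sumR n (fun i => f i + g i) = sumR n f + sumR n g.
Proof. induction n as [|n IH]; simpl; [|rewrite IH]; lra. Qed.

Lemma sumR_scal n c f : sumR n (fun i => c * f i) = c * sumR n f.
Proof. induction n as [|n IH]; simpl; [|rewrite IH]; lra. Qed.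

Lemma sumR_le n f g : (forall i, (i < n)%nat -> f i <= g i) -> sumR n f <= sumR n g.
Proof.
  induction n as [|n IH]; intros Hfg; simpl; [lra|].
  assert (f n <= g n) by (apply Hfg; lia).
  assert (sumR n f <= sumR n g) by (apply IH; intros; apply Hfg; lia).
  lra.
Qed.

Lemma sumR_nonneg n f : (forall i, (i < n)%nat -> 0 <= f i) -> 0 <= sumR n f.
Proof. intros Hf. rewrite <- (sumR_zero n). now apply sumR_le. Qed.

Lemma term_le_sumR n f a : (forall i, (i < n)%nat -> 0 <= f i) -> (a < n)%nat ->
  f a <= sumR n f.
Proof.
  induction n as [|n IH]; intros Hf Ha; [lia|]. simpl.
  assert (0 <= f n) by (apply Hf; lia).
  destruct (Nat.eq_dec a n) as [->|Hne].
  - assert (0 <= sumR n f) by (apply sumR_nonneg; intros; apply Hf; lia). lra.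
  - assert (f a <= sumR n f) by (apply IH; [intros; apply Hf|]; lia). lra.
Qed.

Lemma sumR_abs n f : Rabs (sumR n f) <= sumR n (fun i => Rabs (f i)).
Proof.
  induction n as [|n IH]; simpl; [rewrite Rabs_R0; lra|].
  eapply Rle_trans; [apply Rabs_triang|]. lra.
Qed.

Lemma sumR_idmat n i : (i < n)%nat -> sumR n (fun j => idmat i j) = 1.
Proof.
  assert (below : forall k, (k <= i)%nat -> sumR k (fun j => idmat i j) = 0).
  { induction k as [|k IH]; intros Hk; simpl; auto. rewrite IH by lia. unfold idmat.
    destruct (Nat.eqb_spec i k); [lia|lra]. }
  induction n as [|n IH]; intros Hi; [lia|]. simpl. unfold idmat at 2.
  destruct (Nat.eqb_spec i n) as [->|Hne].
  - rewrite below by lia. lra.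
  - rewrite IH by lia. lra.
Qed.

Lemma summable_le f h : (forall k, f k <= h k) -> summable h -> summable f.
Proof.
  intros Hfh [B HB]. exists B. intros n.
  eapply Rle_trans; [apply sumR_le; intros; apply Hfh | apply HB].
Qed.

Lemma summable_scal c f : 0 <= c -> summable f -> summable (fun k => c * f k).
Proof.
  intros Hc [B HB]. exists (c * B). intros n. rewrite sumR_scal.
  apply Rmult_le_compat_l; auto.
Qed.

Lemma summable_sumR m (f : nat -> nat -> R) :
  (forall l, (l < m)%nat -> summable (fun k => f k l)) ->
  summable (fun k => sumR m (f k)).
Proof.
  induction m as [|m IH]; intros Hf.
  - exists 0. intros n. simpl. rewrite sumR_zero. lra.
  - destruct IH as [B1 H1]; [intros; apply Hf; lia|].
    destruct (Hf m ltac:(lia)) as [B2 H2]. exists (B1 + B2). intros n. simpl.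
    rewrite sumR_plus. specialize (H1 n). specialize (H2 n). lra.
Qed.

Fixpoint count_upto (A : nat -> Prop) (n : nat) : nat :=
  match n with
  | O => O
  | S n' => (count_upto A n' + if excluded_middle_informative (A n') then 1 else 0)%nat
  end.

Lemma count_mono (A B : nat -> Prop) n :
  (forall j, (j < n)%nat -> A j -> B j) -> (count_upto A n <= count_upto B n)%nat.
Proof.
  induction n as [|n IH]; intros AB; simpl; [lia|].
  assert (count_upto A n <= count_upto B n)%nat by (apply IH; intros; apply AB; auto; lia).
  destruct (excluded_middle_informative (A n)) as [HA|];
    destruct (excluded_middle_informative (B n)) as [|HB]; try lia.
  exfalso; apply HB, AB; auto.
Qed.

Lemma count_strict (A B : nat -> Prop) n a :
  (forall j, (j < n)%nat -> A j -> B j) -> (a < n)%nat -> B a -> ~ A a ->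
  (count_upto A n < count_upto B n)%nat.
Proof.
  induction n as [|n IH]; intros AB Ha HBa HAa; simpl; [lia|].
  assert (count_upto A n <= count_upto B n)%nat by (apply count_mono; intros; apply AB; auto).
  destruct (Nat.eq_dec a n) as [->|Hne].
  - destruct (excluded_middle_informative (A n));
      destruct (excluded_middle_informative (B n)); tauto || lia.
  - assert (count_upto A n < count_upto B n)%nat by (apply IH; auto; lia).
    destruct (excluded_middle_informative (A n)) as [HA|];
      destruct (excluded_middle_informative (B n)) as [|HB]; try lia.
    exfalso; apply HB, AB; auto.
Qed.

Lemma count_disjoint (A B : nat -> Prop) n :
  (forall j, (j < n)%nat -> A j -> B j -> False) ->
  (count_upto A n + count_upto B n <= n)%nat.
Proof.
  induction n as [|n IH]; intros disj; simpl; [lia|].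
  assert (count_upto A n + count_upto B n <= n)%nat by (apply IH; eauto).
  destruct (excluded_middle_informative (A n));
    destruct (excluded_middle_informative (B n)); try lia.
  exfalso; eapply disj; eauto.
Qed.

Lemma count_pos (A : nat -> Prop) n a : (a < n)%nat -> A a -> (1 <= count_upto A n)%nat.
Proof.
  intros Ha HA. apply Nat.le_trans with (count_upto (fun j => j = a) n).
  - clear HA. induction n as [|n IH]; simpl; [lia|].
    destruct (excluded_middle_informative (n = a)); [lia|].
    assert (Han : (a < n)%nat) by lia. specialize (IH Han). lia.
  - apply count_mono. intros; subst; auto.
Qed.

Lemma crossing_edge (rel : nat -> nat -> Prop) (A : nat -> Prop) r v :
  clos_refl_trans nat rel r v -> ~ A r -> A v -> exists a b, rel a b /\ ~ A a /\ A b.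
Proof.
  intros path. apply clos_rt_rt1n in path.
  induction path as [|x y z Hxy _ IH]; intros Hx Hz; [tauto|].
  destruct (classic (A y)); [exists x, y|]; auto.
Qed.

Fixpoint max_upto (n : nat) (f : nat -> R) : R :=
  match n with O => f O | S n' => Rmax (max_upto n' f) (f n) end.
Fixpoint min_upto (n : nat) (f : nat -> R) : R :=
  match n with O => f O | S n' => Rmin (min_upto n' f) (f n) end.

Lemma max_upto_ge n f i : (i <= n)%nat -> f i <= max_upto n f.
Proof.
  induction n as [|n IH]; intros Hi; simpl.
  - replace i with 0%nat by lia. lra.
  - destruct (Nat.eq_dec i (S n)) as [->|Hne]; [apply Rmax_r|].
    eapply Rle_trans; [apply IH; lia | apply Rmax_l].
Qed.

Lemma max_upto_attained n f : exists i, (i <= n)%nat /\ max_upto n f = f i.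
Proof.
  induction n as [|n [i [Hi Hmax]]]; simpl; [exists 0%nat; auto|].
  unfold Rmax. destruct (Rle_dec (max_upto n f) (f (S n))); eauto.
Qed.

Lemma min_upto_le n f i : (i <= n)%nat -> min_upto n f <= f i.
Proof.
  induction n as [|n IH]; intros Hi; simpl.
  - replace i with 0%nat by lia. lra.
  - destruct (Nat.eq_dec i (S n)) as [->|Hne]; [apply Rmin_r|].
    eapply Rle_trans; [apply Rmin_l | apply IH; lia].
Qed.

Lemma min_upto_attained n f : exists i, (i <= n)%nat /\ min_upto n f = f i.
Proof.
  induction n as [|n [i [Hi Hmin]]]; simpl; [exists 0%nat; auto|].
  unfold Rmin. destruct (Rle_dec (min_upto n f) (f (S n))); eauto.
Qed.

Lemma Rabs_le_between x b : Rabs x <= b -> - b <= x <= b.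
Proof. intros Hx. pose proof (Rle_abs x). pose proof (Rle_abs (- x)). rewrite Rabs_Ropp in *. lra. Qed.

Lemma Un_cv_const c : Un_cv (fun _ => c) c.
Proof.
  intros eps Heps. exists 0%nat. intros. unfold Rdist. rewrite Rminus_diag, Rabs_R0. lra.
Qed.

Lemma Un_cv_squeeze u v w l :
  Un_cv u l -> Un_cv v l -> (forall n, u n <= w n <= v n) -> Un_cv w l.
Proof.
  intros Hu Hv Hw eps Heps.
  destruct (Hu eps Heps) as [N1 H1], (Hv eps Heps) as [N2 H2].
  exists (N1 + N2)%nat. intros n Hn.
  specialize (H1 n ltac:(lia)). specialize (H2 n ltac:(lia)). specialize (Hw n).
  unfold Rdist in *. apply Rabs_def2 in H1. apply Rabs_def2 in H2.
  apply Rabs_def1; lra.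
Qed.

Section PerturbedConsensus.
Variable N : nat.
Variable P : nat -> nat -> nat -> R.
Variable E : nat -> nat -> nat -> Prop.
Variable delta : R.
Variable g : nat -> R.
Hypothesis N_pos : (1 <= N)%nat.
Hypothesis delta_pos : 0 < delta.
Hypothesis P_nonneg : forall t i j, (i < N)%nat -> (j < N)%nat -> 0 <= P t i j.
Hypothesis P_rows : forall t i, (i < N)%nat -> sumR N (fun j => P t i j) = 1.
Hypothesis P_diag : forall t i, (i < N)%nat -> delta <= P t i i.
Hypothesis P_edge : forall t a b, (a < N)%nat -> (b < N)%nat -> E t a b -> delta <= P t b a.
Hypothesis g_nonneg : forall t, 0 <= g t.

Definition budget (n : nat) : R := sumR n g.

Inductive walk (t0 : nat) : nat -> nat -> nat -> Prop :=
| walk_start : forall j, (j < N)%nat -> walk t0 t0 j j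
| walk_step : forall t j a i, walk t0 t j a -> (i < N)%nat -> (a = i \/ E t a i) ->
    walk t0 (S t) j i.

Lemma walk_bounds t0 t j i : walk t0 t j i -> (t0 <= t)%nat /\ (j < N)%nat /\ (i < N)%nat.
Proof. induction 1; lia. Qed.

Lemma walk_trans t0 t1 t2 j a i : walk t0 t1 j a -> walk t1 t2 a i -> walk t0 t2 j i.
Proof. intros W1 W2. induction W2; auto. eapply walk_step; eauto. Qed.

Lemma walk_stay t0 t1 j : (j < N)%nat -> (t0 <= t1)%nat -> walk t0 t1 j j.
Proof.
  intros Hj Ht. induction Ht as [|t1 Ht IH]; [now constructor|].
  eapply walk_step; eauto.
Qed.

Lemma walk_edge t0 t t1 a b : (a < N)%nat -> (b < N)%nat -> (t0 <= t < t1)%nat ->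
  E t a b -> walk t0 t1 a b.
Proof.
  intros Ha Hb Ht Hab. apply walk_trans with (t1 := S t) (a := b).
  - eapply walk_step; eauto. apply walk_stay; lia.
  - apply walk_stay; lia.
Qed.

Lemma budget_converges : summable g -> exists ls, Un_cv budget ls.
Proof.
  intros [B HB]. destruct (growing_cv budget) as [ls Hls].
  - intros n. unfold budget; simpl. pose proof (g_nonneg n). lra.
  - exists B. intros r [n ->]. apply HB.
  - now exists ls.
Qed.

(* Lower bounds for any trajectory; upper bounds follow by negation. *)
Section LowerBounds.
Variable y v : nat -> nat -> R.
Hypothesis y_rec : forall t i, (i < N)%nat ->
  y (S t) i = sumR N (fun j => P t i j * y t j) + v t i.
Hypothesis v_bound : forall t i, (i < N)%nat -> Rabs (v t i) <= g t.

Lemma step_lower t c a i : (forall l, (l < N)%nat -> c <= y t l) ->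
  (i < N)%nat -> (a < N)%nat ->
  c + P t i a * (y t a - c) - g t <= y (S t) i.
Proof.
  intros Hc Hi Ha. rewrite y_rec by auto.
  assert (split_c : sumR N (fun j => P t i j * y t j) =
    c * sumR N (fun j => P t i j) + sumR N (fun j => P t i j * (y t j - c))).
  { rewrite <- sumR_scal, <- sumR_plus. apply sumR_ext; intros; ring. }
  rewrite split_c, P_rows by auto.
  assert (P t i a * (y t a - c) <= sumR N (fun j => P t i j * (y t j - c))).
  { apply term_le_sumR with (f := fun j => P t i j * (y t j - c)); auto.
    intros l Hl. apply Rmult_le_pos; [apply P_nonneg; auto | specialize (Hc l Hl); lra]. }
  pose proof (Rabs_le_between _ _ (v_bound t i Hi)). lra.
Qed.

Lemma lower_bound_persists t0 c : (forall l, (l < N)%nat -> c <= y t0 l) ->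
  forall d l, (l < N)%nat -> c - (budget (t0 + d) - budget t0) <= y (t0 + d)%nat l.
Proof.
  intros Hc d. induction d as [|d IH]; intros l Hl.
  - rewrite Nat.add_0_r. specialize (Hc l Hl). lra.
  - rewrite Nat.add_succ_r.
    pose proof (step_lower (t0 + d) _ l l IH Hl Hl) as step.
    assert (0 <= P (t0 + d)%nat l l * (y (t0 + d)%nat l - (c - (budget (t0 + d) - budget t0)))).
    { apply Rmult_le_pos; [apply P_nonneg; auto | specialize (IH l Hl); lra]. }
    unfold budget in *; simpl. lra.
Qed.

Lemma walk_lower_bound t0 c : (forall l, (l < N)%nat -> c <= y t0 l) ->
  forall t j i, walk t0 t j i ->
  c - (budget t - budget t0) + delta ^ (t - t0) * (y t0 j - c) <= y t i.
Proof.
  intros Hc t j i W. induction W as [j Hj | t j a i W IH Hi Hai].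
  - rewrite Nat.sub_diag. simpl. lra.
  - destruct (walk_bounds _ _ _ _ W) as [Ht [Hj Ha]].
    set (c' := c - (budget t - budget t0)).
    assert (Hc' : forall l, (l < N)%nat -> c' <= y t l).
    { intros l Hl. pose proof (lower_bound_persists t0 c Hc (t - t0) l Hl) as lb.
      now replace (t0 + (t - t0))%nat with t in lb by lia. }
    pose proof (step_lower t c' a i Hc' Hi Ha) as step.
    assert (HPia : delta <= P t i a).
    { destruct Hai as [<- | Hedge]; [apply P_diag | apply P_edge]; auto. }
    set (q := delta ^ (t - t0) * (y t0 j - c)).
    assert (Hq : 0 <= q).
    { apply Rmult_le_pos; [apply pow_le; lra | specialize (Hc j Hj); lra]. }
    assert (delta * q <= P t i a * (y t a - c')) by (apply Rmult_le_compat; unfold c', q in *; lra).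
    replace (S t - t0)%nat with (S (t - t0)) by lia.
    unfold q, c', budget in *. simpl. lra.
Qed.

End LowerBounds.

Section CommonInfluencer.
Variable L0 : nat.
Hypothesis windows_connected : forall k, quasi_strongly_connected N
  (fun a b => exists t, (k <= t <= k + L0)%nat /\ E t a b).

Definition influencer (t t1 i j : nat) : Prop := (j < N)%nat /\ walk t t1 j i.

Definition common_influencer (t t1 i i' : nat) : Prop :=
  exists j, influencer t t1 i j /\ influencer t t1 i' j.

Definition pair_count (t t1 i i' : nat) : nat :=
  (count_upto (influencer t t1 i) N + count_upto (influencer t t1 i') N)%nat.

Lemma influencer_earlier t t' t1 i j :
  (t <= t')%nat -> influencer t' t1 i j -> influencer t t1 i j.
Proof.
  intros Ht [Hj W]. split; auto. eapply walk_trans; [|exact W]. now apply walk_stay.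
Qed.

Lemma window_new_influencer t t1 i r : (i < N)%nat -> (t + S L0 <= t1)%nat ->
  clos_refl_trans nat (fun a b => (a < N)%nat /\ (b < N)%nat /\
    exists s, (t <= s <= t + L0)%nat /\ E s a b) r i ->
  influencer (t + S L0) t1 i r \/
  exists a, (a < N)%nat /\ influencer t t1 i a /\ ~ influencer (t + S L0) t1 i a.
Proof.
  intros Hi Ht path. destruct (classic (influencer (t + S L0) t1 i r)) as [|Hr]; [now left|right].
  destruct (crossing_edge _ (influencer (t + S L0) t1 i) r i path Hr) as
    [a [b [[Ha [Hb [s [Hs Hab]]]] [Hna [_ Wb]]]]].
  { split; auto. apply walk_stay; lia. }
  exists a. repeat split; auto.
  apply walk_trans with (t1 := (t + S L0)%nat) (a := b); auto.
  apply walk_edge with (t := s); auto; lia.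
Qed.

Lemma pair_count_grows t t1 i i' : (i < N)%nat -> (i' < N)%nat ->
  (t + S L0 <= t1)%nat -> ~ common_influencer t t1 i i' ->
  (pair_count (t + S L0) t1 i i' < pair_count t t1 i i')%nat.
Proof.
  intros Hi Hi' Ht no_common. unfold pair_count.
  assert (earlier : forall k j, (j < N)%nat -> influencer (t + S L0) t1 k j -> influencer t t1 k j)
    by (intros; apply influencer_earlier with (t' := (t + S L0)%nat); auto; lia).
  pose proof (count_mono _ _ N (earlier i)). pose proof (count_mono _ _ N (earlier i')).
  destruct (windows_connected t) as [r [Hr reach]].
  destruct (window_new_influencer t t1 i r Hi Ht (reach i Hi)) as [Hri | [a [Ha [Hat Hna]]]].
  - destruct (window_new_influencer t t1 i' r Hi' Ht (reach i' Hi')) as [Hri' | [a [Ha [Hat Hna]]]].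
    + exfalso. apply no_common. exists r. split; apply earlier; auto.
    + pose proof (count_strict _ _ N a (earlier i') Ha Hat Hna). lia.
  - pose proof (count_strict _ _ N a (earlier i) Ha Hat Hna). lia.
Qed.

Lemma pair_count_lower s t t1 i i' : (i < N)%nat -> (i' < N)%nat ->
  (t + s * S L0 <= t1)%nat -> ~ common_influencer t t1 i i' ->
  (s + 2 <= pair_count t t1 i i')%nat.
Proof.
  intros Hi Hi'. revert t. induction s as [|s IH]; intros t Ht no_common.
  - unfold pair_count.
    pose proof (count_pos (influencer t t1 i) N i Hi (conj Hi (walk_stay t t1 i Hi ltac:(lia)))).
    pose proof (count_pos (influencer t t1 i') N i' Hi' (conj Hi' (walk_stay t t1 i' Hi' ltac:(lia)))).
    lia.
  - assert (no_common' : ~ common_influencer (t + S L0) t1 i i').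
    { intros [j [H1 H2]]. apply no_common. exists j.
      split; apply influencer_earlier with (t' := (t + S L0)%nat); auto; lia. }
    specialize (IH (t + S L0)%nat ltac:(simpl in Ht; lia) no_common').
    pose proof (pair_count_grows t t1 i i' Hi Hi' ltac:(simpl in Ht; lia) no_common).
    lia.
Qed.

Definition horizon : nat := ((N - 1) * S L0)%nat.

Lemma common_influencer_exists t0 i i' : (i < N)%nat -> (i' < N)%nat ->
  exists j, (j < N)%nat /\ walk t0 (t0 + horizon) j i /\ walk t0 (t0 + horizon) j i'.
Proof.
  intros Hi Hi'. set (t1 := (t0 + horizon)%nat).
  destruct (classic (common_influencer t0 t1 i i')) as [[j [[Hj W] [_ W']]] | no_common].
  - now exists j.
  - exfalso.
    pose proof (pair_count_lower (N - 1) t0 t1 i i' Hi Hi' (le_n _) no_common).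
    assert (disjoint : (pair_count t0 t1 i i' <= N)%nat).
    { apply count_disjoint. intros j _ H1 H2. apply no_common. now exists j. }
    lia.
Qed.

Section Trajectory.
Variable x w : nat -> nat -> R.
Hypothesis x_rec : forall t i, (i < N)%nat ->
  x (S t) i = sumR N (fun j => P t i j * x t j) + w t i.
Hypothesis w_bound : forall t i, (i < N)%nat -> Rabs (w t i) <= g t.

Definition top (t : nat) : R := max_upto (N - 1) (x t).
Definition bottom (t : nat) : R := min_upto (N - 1) (x t).

Lemma le_top t i : (i < N)%nat -> x t i <= top t.
Proof. intros; apply max_upto_ge; lia. Qed.

Lemma bottom_le t i : (i < N)%nat -> bottom t <= x t i.
Proof. intros; apply min_upto_le; lia. Qed.

Lemma bottom_le_top t : bottom t <= top t.
Proof. eapply Rle_trans; [apply (bottom_le t 0%nat) | apply le_top]; lia. Qed.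

Lemma top_step t : top (S t) <= top t + g t.
Proof.
  destruct (max_upto_attained (N - 1) (x (S t))) as [i [Hi Hmax]].
  unfold top at 1. rewrite Hmax, x_rec by lia.
  assert (sumR N (fun j => P t i j * x t j) <= sumR N (fun j => top t * P t i j)).
  { apply sumR_le. intros j Hj. rewrite Rmult_comm.
    apply Rmult_le_compat_r; [apply P_nonneg; lia | now apply le_top]. }
  rewrite sumR_scal, P_rows in H by lia.
  pose proof (Rabs_le_between _ _ (w_bound t i ltac:(lia))). lra.
Qed.

Lemma bottom_step t : bottom t - g t <= bottom (S t).
Proof.
  destruct (min_upto_attained (N - 1) (x (S t))) as [i [Hi Hmin]].
  unfold bottom at 2. rewrite Hmin, x_rec by lia.
  assert (sumR N (fun j => bottom t * P t i j) <= sumR N (fun j => P t i j * x t j)).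
  { apply sumR_le. intros j Hj. rewrite Rmult_comm.
    apply Rmult_le_compat_l; [apply P_nonneg; lia | now apply bottom_le]. }
  rewrite sumR_scal, P_rows in H by lia.
  pose proof (Rabs_le_between _ _ (w_bound t i ltac:(lia))). lra.
Qed.

(* Over T = horizon steps the spread contracts by the factor 1 - delta^T,
   up to twice the budget spent: the maximiser and the minimiser at time
   t0 + T share an influencer at time t0. *)
Lemma spread_contracts t0 :
  top (t0 + horizon) - bottom (t0 + horizon) <=
  (1 - delta ^ horizon) * (top t0 - bottom t0) + 2 * (budget (t0 + horizon) - budget t0).
Proof.
  destruct (max_upto_attained (N - 1) (x (t0 + horizon)%nat)) as [i [Hi Hmax]].
  destruct (min_upto_attained (N - 1) (x (t0 + horizon)%nat)) as [i' [Hi' Hmin]].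
  unfold top at 1, bottom at 1. rewrite Hmax, Hmin.
  destruct (common_influencer_exists t0 i i' ltac:(lia) ltac:(lia)) as [j [Hj [Wi Wi']]].
  pose proof (walk_lower_bound x w x_rec w_bound t0 (bottom t0)
    (fun l Hl => bottom_le t0 l Hl) _ _ _ Wi') as low.
  assert (neg_rec : forall t i, (i < N)%nat -> - x (S t) i =
     sumR N (fun j => P t i j * - x t j) + - w t i).
  { intros t k Hk. rewrite x_rec by auto.
    rewrite (sumR_ext N (fun j => P t k j * - x t j) (fun j => -1 * (P t k j * x t j)))
      by (intros; ring).
    rewrite sumR_scal. ring. }
  assert (neg_bound : forall t i, (i < N)%nat -> Rabs (- w t i) <= g t).
  { intros t k Hk. rewrite Rabs_Ropp. auto. }
  pose proof (walk_lower_bound (fun t i => - x t i) (fun t i => - w t i) neg_rec neg_bound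
    t0 (- top t0) (fun l Hl => Ropp_le_contravar _ _ (le_top t0 l Hl)) _ _ _ Wi) as up.
  simpl in up.
  replace (t0 + horizon - t0)%nat with horizon in low, up by lia.
  assert (0 <= delta ^ horizon) by (apply pow_le; lra).
  lra.
Qed.

Lemma bottom_drift t : bottom 0 - budget t <= bottom t.
Proof.
  induction t as [|t IH]; unfold budget in *; simpl; [lra|].
  pose proof (bottom_step t). lra.
Qed.

Lemma top_drift t : top t <= top 0 + budget t.
Proof.
  induction t as [|t IH]; unfold budget in *; simpl; [lra|].
  pose proof (top_step t). lra.
Qed.

(* With a summable perturbation the envelopes converge: top - budget
   decreases, bottom + budget increases, and both stay bounded. *)
Lemma envelopes_converge : summable g ->
  exists a b, Un_cv top a /\ Un_cv bottom b.
Proof.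
  intros g_sum. destruct (budget_converges g_sum) as [ls Hls].
  destruct g_sum as [B HB].
  destruct (decreasing_cv (fun t => top t - budget t)) as [la Hla].
  { intros n. pose proof (top_step n). unfold budget; simpl. lra. }
  { exists (2 * B - bottom 0). intros r [n ->]. unfold opp_seq.
    pose proof (bottom_le_top n). pose proof (bottom_drift n). pose proof (HB n).
    unfold budget in *. lra. }
  destruct (growing_cv (fun t => bottom t + budget t)) as [lb Hlb].
  { intros n. pose proof (bottom_step n). unfold budget; simpl. lra. }
  { exists (top 0 + 2 * B). intros r [n ->].
    pose proof (bottom_le_top n). pose proof (top_drift n). pose proof (HB n).
    unfold budget in *. lra. }
  exists (la + ls), (lb - ls). split.
  - eapply Un_cv_ext; [|apply (CV_plus _ _ _ _ Hla Hls)]. intros n; simpl; ring.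
  - eapply Un_cv_ext; [|apply (CV_minus _ _ _ _ Hlb Hls)]. intros n; simpl; ring.
Qed.

(* Consensus: the envelopes have a common limit, since their gap d satisfies
   d <= (1 - delta^horizon) d by [spread_contracts]. *)
Theorem perturbed_consensus : summable g ->
  exists z, forall i, (i < N)%nat -> Un_cv (fun k => x k i) z.
Proof.
  intros g_sum. destruct (envelopes_converge g_sum) as [a [b [Ha Hb]]].
  destruct (budget_converges g_sum) as [ls Hls].
  set (eps := delta ^ horizon).
  assert (eps_pos : 0 < eps) by (apply pow_lt; lra).
  assert (gap : Un_cv (fun t => top t - bottom t) (a - b)) by (apply CV_minus; auto).
  assert (gap_le : a - b <= (1 - eps) * (a - b) + 2 * (ls - ls)).
  { apply Rle_cv_lim with
      (Un := fun t => top (t + horizon)%nat - bottom (t + horizon)%nat)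
      (Vn := fun t => (1 - eps) * (top t - bottom t) + 2 * (budget (t + horizon) - budget t)).
    - intros n. apply spread_contracts.
    - exact (CV_shift' (fun t => top t - bottom t) horizon _ gap).
    - apply CV_plus; apply CV_mult; try apply Un_cv_const; auto.
      apply CV_minus; auto. exact (CV_shift' budget horizon _ Hls). }
  assert (gap_ge : 0 <= a - b).
  { apply Rle_cv_lim with (Un := fun _ => 0) (Vn := fun t => top t - bottom t); auto.
    - intros n. pose proof (bottom_le_top n). lra.
    - apply Un_cv_const. }
  assert (a = b) by nra.
  exists a. intros i Hi. apply Un_cv_squeeze with (u := bottom) (v := top); auto.
  - now subst.
  - intros n. split; [apply bottom_le | apply le_top]; auto.
Qed.

End Trajectory.
End CommonInfluencer.
End PerturbedConsensus.

Lemma finite_upper_bound (A : Type) (l : list A) (f : A -> R) :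
  exists B, 0 <= B /\ forall q, In q l -> f q <= B.
Proof.
  induction l as [|a l [B [HB Hl]]].
  - exists 0. split; [lra | intros q []].
  - exists (Rmax (f a) B). split; [eapply Rle_trans; [exact HB | apply Rmax_r]|].
    intros q [<- | Hq]; [apply Rmax_l | eapply Rle_trans; [apply Hl; auto | apply Rmax_r]].
Qed.

Section GraphFamily.
Variable N : nat.
Variable Q : Type.
Variable Qlist : list Q.
Hypothesis Q_finite : forall q : Q, In q Qlist.
Variable alpha : Q -> nat -> nat -> R.
Hypothesis alpha_nonneg : forall q i j, 0 <= alpha q i j.
Hypothesis alpha_noself : forall q i, alpha q i i = 0.
Variable sigma : nat -> Q.

Lemma weights_bounded_below : exists a, 0 < a /\
  forall q i j, (i < N)%nat -> (j < N)%nat -> 0 < alpha q i j -> a <= alpha q i j.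
Proof.
  set (inv_weight q i j := if Rlt_dec 0 (alpha q i j) then / alpha q i j else 0).
  assert (inv_weight_nonneg : forall q i j, 0 <= inv_weight q i j).
  { intros q i j. unfold inv_weight. destruct (Rlt_dec 0 (alpha q i j)); [|lra].
    left; now apply Rinv_0_lt_compat. }
  destruct (finite_upper_bound Q Qlist
    (fun q => sumR N (fun i => sumR N (fun j => inv_weight q i j)))) as [B [HB bound]].
  exists (/ (1 + B)). split; [apply Rinv_0_lt_compat; lra|].
  intros q i j Hi Hj Hpos.
  assert (inv_le : / alpha q i j <= B).
  { replace (/ alpha q i j) with (inv_weight q i j)
      by (unfold inv_weight; destruct (Rlt_dec 0 (alpha q i j)); [auto | lra]).
    eapply Rle_trans; [apply term_le_sumR with (n := N) (f := inv_weight q i); auto|].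
    eapply Rle_trans; [|apply (bound q (Q_finite q))].
    apply term_le_sumR with (f := fun i => sumR N (inv_weight q i)); auto.
    intros; apply sumR_nonneg; auto. }
  rewrite <- (Rinv_inv (alpha q i j)). apply Rinv_le_contravar; [apply Rinv_0_lt_compat|]; lra.
Qed.

Lemma degree_nonneg t i : 0 <= deg N alpha sigma t i.
Proof. apply sumR_nonneg. auto. Qed.

Lemma degrees_bounded : exists D, 0 <= D /\
  forall t i, (i < N)%nat -> deg N alpha sigma t i <= D.
Proof.
  destruct (finite_upper_bound Q Qlist
    (fun q => sumR N (fun i => sumR N (fun j => alpha q i j)))) as [D [HD bound]].
  exists D. split; auto. intros t i Hi.
  eapply Rle_trans; [|apply (bound (sigma t) (Q_finite _))].
  apply term_le_sumR with (f := fun i => sumR N (fun j => alpha (sigma t) i j)); auto.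
  intros; apply sumR_nonneg; auto.
Qed.

Lemma averaging_weight t i j :
  idmat i j - Smat N alpha sigma t i j =
  (idmat i j + alpha (sigma t) i j) / (1 + deg N alpha sigma t i).
Proof.
  pose proof (degree_nonneg t i). unfold Smat, idmat.
  destruct (Nat.eqb_spec i j) as [<- | Hne].
  - rewrite alpha_noself. field. lra.
  - field. lra.
Qed.

Lemma averaging_weight_nonneg t i j : 0 <= idmat i j - Smat N alpha sigma t i j.
Proof.
  rewrite averaging_weight. pose proof (degree_nonneg t i).
  apply Rmult_le_pos; [|left; apply Rinv_0_lt_compat; lra].
  pose proof (alpha_nonneg (sigma t) i j). unfold idmat. destruct (Nat.eqb i j); lra.
Qed.

Lemma averaging_rows t i : (i < N)%nat ->
  sumR N (fun j => idmat i j - Smat N alpha sigma t i j) = 1.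
Proof.
  intros Hi. pose proof (degree_nonneg t i).
  rewrite (sumR_ext N _ (fun j => / (1 + deg N alpha sigma t i) * (idmat i j + alpha (sigma t) i j)))
    by (intros; rewrite averaging_weight; unfold Rdiv; ring).
  rewrite sumR_scal, sumR_plus, sumR_idmat by auto.
  change (sumR N (alpha (sigma t) i)) with (deg N alpha sigma t i). field. lra.
Qed.

Lemma averaging_weights_bounded_below : exists delta, 0 < delta /\
  (forall t i, (i < N)%nat -> delta <= idmat i i - Smat N alpha sigma t i i) /\
  (forall t a b, (a < N)%nat -> (b < N)%nat -> 0 < alpha (sigma t) b a ->
     delta <= idmat b a - Smat N alpha sigma t b a).
Proof.
  destruct weights_bounded_below as [amin [amin_pos amin_le]].
  destruct degrees_bounded as [D [D_nonneg deg_le]].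
  exists (Rmin 1 amin / (1 + D)). split; [apply Rdiv_lt_0_compat; [apply Rmin_glb_lt|]; lra|].
  assert (lower : forall t i j, (i < N)%nat -> Rmin 1 amin <= idmat i j + alpha (sigma t) i j ->
    Rmin 1 amin / (1 + D) <= idmat i j - Smat N alpha sigma t i j).
  { intros t i j Hi Hnum. rewrite averaging_weight.
    pose proof (degree_nonneg t i). pose proof (deg_le t i Hi).
    pose proof (Rmin_r 1 amin). pose proof (Rmin_glb_lt 1 amin 0 ltac:(lra) amin_pos).
    unfold Rdiv. apply Rmult_le_compat; try lra; [left; apply Rinv_0_lt_compat; lra|].
    apply Rinv_le_contravar; lra. }
  split.
  - intros t i Hi. apply lower; auto. unfold idmat. rewrite Nat.eqb_refl, alpha_noself.
    pose proof (Rmin_l 1 amin). lra.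
  - intros t a b Ha Hb Hpos. apply lower; auto.
    pose proof (amin_le (sigma t) b a Hb Ha Hpos). pose proof (Rmin_r 1 amin).
    assert (0 <= idmat b a) by (unfold idmat; destruct (Nat.eqb b a); lra). lra.
Qed.

End GraphFamily.

Lemma kron_row_bound (N m : nat) (X : nat -> nat -> R) (e : nat -> R) i :
  (1 <= m)%nat ->
  Rabs (mulmv (N * m) (kron 1 m idmat X) e i) <=
  sumR (N * m) (fun j => Rabs (e j)) * sumR m (fun l => Rabs (X 0%nat l)).
Proof.
  intros Hm. unfold mulmv. eapply Rle_trans; [apply sumR_abs|].
  rewrite Rmult_comm, <- sumR_scal. apply sumR_le. intros j Hj.
  unfold kron. rewrite Nat.mod_1_r, !Rabs_mult.
  assert (id_le : Rabs (idmat (i / 1) (j / m)) <= 1).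
  { unfold idmat. destruct (Nat.eqb _ _); [rewrite Rabs_R1 | rewrite Rabs_R0]; lra. }
  assert (X_le : Rabs (X 0%nat (j mod m)%nat) <= sumR m (fun l => Rabs (X 0%nat l))).
  { apply term_le_sumR with (f := fun l => Rabs (X 0%nat l)).
    - intros; apply Rabs_pos.
    - apply Nat.mod_upper_bound; lia. }
  pose proof (Rabs_pos (idmat (i / 1) (j / m))). pose proof (Rabs_pos (X 0%nat (j mod m)%nat)).
  pose proof (Rabs_pos (e j)).
  apply Rmult_le_compat_r; [apply Rabs_pos|]. nra.
Qed.

Lemma row_pow_summable (m : nat) (M : nat -> nat -> R) (c : nat -> R) :
  (1 <= m)%nat -> schur_stable m M ->
  summable (fun k => sumR m (fun l => Rabs (matmul m (fun _ j => c j) (matpow m M k) 0%nat l))).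
Proof.
  intros Hm stable.
  apply summable_le with
    (h := fun k => sumR m (fun l => sumR m (fun l' => Rabs (c l') * Rabs (matpow m M k l' l)))).
  - intros k. apply sumR_le. intros l Hl. unfold matmul.
    eapply Rle_trans; [apply sumR_abs|].
    apply sumR_le. intros l' Hl'. rewrite Rabs_mult. lra.
  - apply summable_sumR. intros l Hl.
    apply summable_sumR. intros l' Hl'.
    apply summable_scal; [apply Rabs_pos|].
    apply StableMatrixPowers.pow_summable; auto.
Qed.

Theorem lemma3
  (N m : nat) (HN : (1 <= N)%nat) (Hm : (2 <= m)%nat)
  (C K5 K6 : nat -> R)   (* C, K5 : 1 x m (indexed by column); K6 : m x 1 *)
  (Hstab : schur_stable m (fun i j => integrator i j + K6 i * C j))
  (e0 : nat -> R)        (* e0 in R^(N m) *)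
  (Q : Type) (Qlist : list Q) (HQfin : forall q : Q, In q Qlist)
  (alpha : Q -> nat -> nat -> R)
  (Halpha_nonneg : forall q i j, 0 <= alpha q i j)
  (Halpha_noself : forall q i, alpha q i i = 0)
  (sigma : nat -> Q)
  (Hconn : UJQSC N alpha sigma)
  (Z : nat -> nat -> R)  (* Z k i = \bar z_{i+1}[k]; Z 0 arbitrary *)
  (Hrec : forall k i, (i < N)%nat ->
     Z (S k) i =
       sumR N (fun j => (idmat i j - Smat N alpha sigma k i j) * Z k j)
       + mulmv (N * m)
           (kron 1 m idmat
              (matmul m
                 (fun _ j => sumR m (fun l => K5 l * K6 l) * C j)
                 (matpow m (fun i j => integrator i j + K6 i * C j) k)))
           e0 i) :
  exists zstar : R, forall i, (i < N)%nat -> Un_cv (fun k => Z k i) zstar.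
Proof.
  destruct Hconn as [L [_ windows]].
  destruct (averaging_weights_bounded_below N Q Qlist HQfin alpha Halpha_nonneg Halpha_noself sigma)
    as [delta [delta_pos [diag_le edge_le]]].
  set (M := fun i j => integrator i j + K6 i * C j) in Hrec, Hstab.
  set (c := fun j => sumR m (fun l => K5 l * K6 l) * C j) in Hrec.
  set (g := fun k => sumR (N * m) (fun j => Rabs (e0 j)) *
    sumR m (fun l => Rabs (matmul m (fun _ j => c j) (matpow m M k) 0%nat l))).
  apply (perturbed_consensus N (fun t i j => idmat i j - Smat N alpha sigma t i j)
    (fun t a b => 0 < alpha (sigma t) b a) delta g HN delta_pos) with (L0 := L)
    (w := fun k i => mulmv (N * m) (kron 1 m idmat (matmul m (fun _ j => c j) (matpow m M k))) e0 i);
    auto.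
  - intros; apply averaging_weight_nonneg; auto.
  - intros; apply averaging_rows; auto.
  - intros t. apply Rmult_le_pos; apply sumR_nonneg; intros; apply Rabs_pos.
  - intros t i Hi. apply kron_row_bound. lia.
  - apply summable_scal; [apply sumR_nonneg; intros; apply Rabs_pos|].
    apply row_pow_summable; auto. lia.
Qed.
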